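(* Let $f:\mathbb{R}^n\to\mathbb{R}$ be bounded below, let $\mathcal{X}\subseteq\mathbb{R}^n$ be a set such that $\min_{\mathbf{x}}\{f(\mathbf{x}) : \mathbf{x}\in\mathcal{X}\}$ has an optimal solution, and let $p_f$ be any probability distribution whose support is $\mathcal{X}$. Let $(G^*, D^*_{G^*})$ be the globally optimal generator/discriminator pair for a GAN trained on $\mathbf{x}\sim p_f$, so that $D^*_{G^*}(\mathbf{x}) = \tfrac12$ if $p_f(\mathbf{x})>0$ and $D^*_{G^*}(\mathbf{x})=0$ if $p_f(\mathbf{x})=0$. Then for any $\lambda>0$ and any $\delta$, the problems $$\min_{\mathbf{x}}\Big\{ f(\mathbf{x}) + \lambda\big(\delta - \log D^*_{G^*}(\mathbf{x})\big)\Big\}\quad\text{and}\quad \min_{\mathbf{x}}\{f(\mathbf{x}) : \mathbf{x}\in\mathcal{X}\}$$ have the same optimal solutions.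
   Context: A GAN consists of a generator $G$ (mapping latent samples $\mathbf{z}\sim p_z$ to outputs with distribution $p_g$) and a discriminator $D$ with values in $[0,1]$, trained on the min–max loss $\min_G\max_D\{\mathbb{E}_{p_f}[\log D(\mathbf{x})] + \mathbb{E}_{p_z}[\log(1-D(G(\mathbf{z})))]\}$; a globally optimal pair solves this min–max problem. The convention $-\log 0 = +\infty$ is used. *)

From mathcomp Require Import all_boot all_order all_algebra.
From mathcomp Require Import all_classical all_reals all_analysis.
Set Implicit Arguments. Unset Strict Implicit. Unset Printing Implicit Defensive.
Import Order.TTheory GRing.Theory Num.Theory.
Local Open Scope classical_set_scope.
Local Open Scope ring_scope.

Definition neglog {R : realType} (d : R) : \bar R :=
  if 0 < d then (- ln d)%:E else +oo%E.

Definition is_minimizer {T : Type} {R : realType} (g : T -> \bar R) (x : T) : Prop :=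
  forall y, (g x <= g y)%E.

Definition is_constrained_minimizer {T : Type} {R : realType}
  (f : T -> R) (X : set T) (x : T) : Prop :=
  X x /\ forall y, X y -> f x <= f y.

Definition gan_penalized {T : Type} {R : realType} (f : T -> R) (D : T -> R)
  (lam delta : R) (x : T) : \bar R :=
  ((f x)%:E + lam%:E * (delta%:E + neglog (D x)))%E.

(** The discriminator [D^*] equals [1/2] on the support [X] of [p_f] and [0]
    off it, so the penalty [lambda (delta - log D^* x)] is the constant
    [lambda (delta + ln 2)] on [X] and [+oo] outside: it is an exact barrier
    for [X]. Minimizing [f] plus a constant on [X] and [+oo] elsewhere has the
    same optimal solutions as minimizing [f] over [X], as soon as [X] is
    nonempty. *)
From mathcomp Require Import all_boot all_order all_algebra.
From mathcomp Require Import all_classical all_reals all_analysis.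
Import Order.TTheory GRing.Theory Num.Theory.
Local Open Scope classical_set_scope.
Local Open Scope ring_scope.

Lemma neglog_gt0 {R : realType} (d : R) : 0 < d -> neglog d = (- ln d)%:E.
Proof. by rewrite /neglog => ->. Qed.

Lemma neglog_le0 {R : realType} (d : R) : d <= 0 -> neglog d = +oo%E.
Proof. by rewrite /neglog leNgt => /negbTE ->. Qed.

Lemma neglog_half {R : realType} : neglog (2^-1 : R) = (ln 2)%:E.
Proof. by rewrite neglog_gt0 ?invr_gt0 ?ltr0n // lnV ?posrE ?ltr0n // opprK. Qed.

Section ExactPenalty.
Variables (T : Type) (R : realType) (f : T -> R) (X : set T).

Lemma is_minimizer_barrier (g : T -> \bar R) (c : R) :
  (exists x0, X x0) ->
  (forall x, X x -> g x = (f x + c)%:E) ->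
  (forall x, ~ X x -> g x = +oo%E) ->
  forall x, is_minimizer g x <-> is_constrained_minimizer f X x.
Proof.
move=> [x0 Xx0] g_in g_out x; split.
- move=> gmin.
  have Xx : X x.
    apply: contrapT => nXx.
    by have := gmin x0; rewrite g_out // g_in // leNgt ltey.
  split=> // y Xy.
  by have := gmin y; rewrite !g_in // lee_fin lerD2r.
- move=> [Xx fmin] y.
  have [Xy|nXy] := pselect (X y); last by rewrite (g_out _ nXy) leey.
  by rewrite !g_in // lee_fin lerD2r fmin.
Qed.

Variables (D : T -> R) (lam delta : R).
Hypotheses (lam_gt0 : 0 < lam)
  (D_in : forall x, X x -> D x = 2^-1) (D_out : forall x, ~ X x -> D x = 0).

Lemma gan_penalized_in x :
  X x -> gan_penalized f D lam delta x = (f x + lam * (delta + ln 2))%:E.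
Proof. by move=> Xx; rewrite /gan_penalized D_in // neglog_half. Qed.

Lemma gan_penalized_out x : ~ X x -> gan_penalized f D lam delta x = +oo%E.
Proof.
move=> nXx; rewrite /gan_penalized D_out // neglog_le0 // addey //.
by rewrite gt0_muley ?lte_fin // addey.
Qed.

Lemma is_minimizer_gan_penalized :
  (exists x0, X x0) ->
  forall x, is_minimizer (gan_penalized f D lam delta) x <->
            is_constrained_minimizer f X x.
Proof.
move=> X0; exact: (is_minimizer_barrier _ _ X0 gan_penalized_in gan_penalized_out).
Qed.

End ExactPenalty.

Theorem corollary1 (R : realType) (n : nat) (f : 'rV[R]_n -> R)
  (X : set 'rV[R]_n) (p_f : 'rV[R]_n -> R) (Dstar : 'rV[R]_n -> R) :
  (exists m : R, forall x, m <= f x) ->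
  (exists x, is_constrained_minimizer f X x) ->
  (forall x, 0 <= p_f x) ->
  X = [set x | 0 < p_f x] ->
  (forall x, 0 < p_f x -> Dstar x = 2^-1) ->
  (forall x, p_f x = 0 -> Dstar x = 0) ->
  forall lam delta : R, 0 < lam ->
  forall x, is_minimizer (gan_penalized f Dstar lam delta) x <->
            is_constrained_minimizer f X x.
Proof.
move=> _ [x0 [Xx0 _]] p_ge0 XE D_in D_out lam delta lam_gt0.
apply: is_minimizer_gan_penalized => //; last by exists x0.
- by move=> x; rewrite XE => /D_in.
- move=> x; rewrite XE => /negP; rewrite -leNgt => p_le0.
  by apply: D_out; apply/eqP; rewrite eq_le p_le0 p_ge0.
Qed.
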